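(* Let $(R,\mathfrak{m})$ be a commutative Artinian local ring with identity and $\mathfrak{m}\neq0$. If $f\in R[x]$ is a regular polynomial of degree $n$, then $L(f)\subseteq\{1,2,\dots,n\}$.
   Context: A polynomial is regular if not all of its coefficients lie in $\mathfrak{m}$. A nonunit polynomial is irreducible if in any factorization into two polynomials one factor is a unit of $R[x]$ (a polynomial $a_0+\dots+a_dx^d$ is a unit iff $a_0$ is a unit and $a_i\in\mathfrak{m}$ for $i>0$). A positive integer $k$ is a length of $f$ if $f$ is a product of $k$ irreducible polynomials of $R[x]$; $L(f)$ denotes the set of lengths of $f$. *)

From HB Require Import structures.
From mathcomp Require Import all_boot all_order all_algebra.
Set Implicit Arguments. Unset Strict Implicit. Unset Printing Implicit Defensive.
Import GRing.Theory.
Local Open Scope ring_scope.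

Definition is_ideal (R : comNzRingType) (I : R -> Prop) : Prop :=
  I 0 /\ (forall x y, I x -> I y -> I (x + y)) /\ (forall r x, I x -> I (r * x)).

Definition proper_ideal (R : comNzRingType) (I : R -> Prop) : Prop :=
  is_ideal I /\ ~ I 1.

Definition local_ring (R : comNzRingType) (m : R -> Prop) : Prop :=
  proper_ideal m /\ (forall I, proper_ideal I -> forall x, I x -> m x).

Definition artinian (R : comNzRingType) : Prop :=
  forall I : nat -> R -> Prop,
    (forall n, is_ideal (I n)) ->
    (forall n x, I n.+1 x -> I n x) ->
    exists N : nat, forall n, (N <= n)%N -> forall x, I n x <-> I N x.

Definition regular_poly (R : comNzRingType) (m : R -> Prop) (f : {poly R}) : Prop :=
  exists i : nat, ~ m f`_i.

Definition poly_unit (R : comNzRingType) (p : {poly R}) : Prop :=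
  exists q : {poly R}, p * q = 1.

Definition poly_irreducible (R : comNzRingType) (f : {poly R}) : Prop :=
  ~ poly_unit f /\
  forall g h : {poly R}, f = g * h -> poly_unit g \/ poly_unit h.

Definition is_length (R : comNzRingType) (f : {poly R}) (k : nat) : Prop :=
  (0 < k)%N /\
  exists s : seq {poly R},
    size s = k /\ (forall g, g \in s -> poly_irreducible g) /\
    \prod_(g <- s) g = f.

From Pilot Require Import Defs.
From HB Require Import structures.
From mathcomp Require Import all_boot all_order all_algebra.
From mathcomp Require Import zify.
From Stdlib Require Import Classical.
Import GRing.Theory.
Local Open Scope ring_scope.
Set Implicit Arguments. Unset Strict Implicit.

(* Measure a regular polynomial by the degree of its image in (R/m)[x].  Since
   R/m is a field, this residue degree is additive on products, and it never
   exceeds the degree.  An irreducible factor has positive residue degree: if it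
   reduced to a nonzero constant it would be a unit plus a polynomial with
   coefficients in m, and m is nil because R is Artinian, so it would be a unit.
   Hence a product of k irreducibles has residue degree at least k. *)

Definition nilpotent (A : comNzRingType) (x : A) : Prop := exists N, x ^+ N = 0.

Section Nilpotent.
Variable A : comNzRingType.
Implicit Types x y : A.

Lemma expr0_ge x a j : x ^+ a = 0 -> (a <= j)%N -> x ^+ j = 0.
Proof. by move=> xa0 le_aj; rewrite -(subnKC le_aj) exprD xa0 mul0r. Qed.

Lemma nilpotentD x y : nilpotent x -> nilpotent y -> nilpotent (x + y).
Proof.
move=> [a xa0] [b yb0]; exists (a + b)%N; rewrite exprDn big1 // => i _.
have [le_bi|lt_ib] := leqP b i; first by rewrite (expr0_ge yb0 le_bi) mulr0 mul0rn.
by rewrite (@expr0_ge x a) ?mul0r ?mul0rn //; lia.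
Qed.

Lemma nilpotentMl x y : nilpotent x -> nilpotent (y * x).
Proof. by move=> [a xa0]; exists a; rewrite exprMn xa0 mulr0. Qed.

Lemma unit_subr1_nilpotent x : nilpotent x -> exists y, (1 - x) * y = 1.
Proof.
move=> [N xN0]; exists (\sum_(i < N) x ^+ i).
by rewrite -opprB mulNr -subrX1 xN0 sub0r opprK.
Qed.

End Nilpotent.

Lemma nilpotent_poly (A : comNzRingType) (p : {poly A}) :
  (forall i, nilpotent p`_i) -> nilpotent p.
Proof.
move=> nil_coef; rewrite -[p]coefK poly_def.
apply: (big_ind (@nilpotent _)); [by exists 1%N | exact: nilpotentD |].
move=> i _; have [N cN0] := nil_coef i.
by rewrite -mul_polyC mulrC; apply: nilpotentMl; exists N; rewrite -rmorphXn cN0.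
Qed.

Section LocalRing.
Variables (R : comNzRingType) (m : R -> Prop).
Hypothesis m_local : local_ring m.

Lemma maxideal0 : m 0.
Proof. by case: m_local => [[[]]]. Qed.

Lemma maxidealD x y : m x -> m y -> m (x + y).
Proof. by case: m_local => [[[_ [mD _]]]] _ _; apply: mD. Qed.

Lemma maxidealMl r x : m x -> m (r * x).
Proof. by case: m_local => [[[_ [_ mM]]]] _ _; apply: mM. Qed.

Lemma maxidealMr r x : m x -> m (x * r).
Proof. by rewrite mulrC; apply: maxidealMl. Qed.

Lemma maxidealN x : m x -> m (- x).
Proof. by rewrite -mulN1r; apply: maxidealMl. Qed.

Lemma maxideal_not1 : ~ m 1.
Proof. by case: m_local => [[]]. Qed.

Lemma maxideal_sum (I : Type) (r : seq I) (P : pred I) (F : I -> R) :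
  (forall i, P i -> m (F i)) -> m (\sum_(i <- r | P i) F i).
Proof. by move=> mF; apply: big_ind => //; [exact: maxideal0 | exact: maxidealD]. Qed.

Lemma unit_notin_maxideal c : ~ m c -> exists d, c * d = 1.
Proof.
move=> mNc; apply: NNPP => c_nonunit; apply: mNc.
case: m_local => _ m_max; apply: (m_max (fun y => exists r, y = c * r));
  last by exists 1; rewrite mulr1.
split; last by case=> r c_r1; apply: c_nonunit; exists r.
split; first by exists 0; rewrite mulr0.
split; first by move=> _ _ [a ->] [b ->]; exists (a + b); rewrite mulrDr.
by move=> r _ [a ->]; exists (r * a); rewrite mulrCA.
Qed.

Lemma notin_maxidealM x y : ~ m x -> ~ m y -> ~ m (x * y).
Proof.
move=> /unit_notin_maxideal [d xd1] /unit_notin_maxideal [e ye1] mxy.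
apply: maxideal_not1; have -> : 1 = (x * y) * (d * e) by rewrite mulrACA xd1 ye1 mulr1.
exact: maxidealMr.
Qed.

Lemma notin_maxidealD x y : ~ m x -> m y -> ~ m (x + y).
Proof.
move=> mNx my mxy; apply: mNx; rewrite -(addrK y x).
by apply: maxidealD => //; apply: maxidealN.
Qed.

Lemma nilpotent_maxideal : artinian R -> forall x, m x -> nilpotent x.
Proof.
move=> R_artinian x mx.
pose xR n y := exists r, y = x ^+ n * r.
have xR_ideal n : is_ideal (xR n).
  split; first by exists 0; rewrite mulr0.
  split; first by move=> _ _ [u ->] [v ->]; exists (u + v); rewrite mulrDr.
  by move=> r _ [u ->]; exists (r * u); rewrite mulrCA.
have xR_decr n y : xR n.+1 y -> xR n y.
  by move=> [r ->]; exists (x * r); rewrite exprS mulrCA mulrA.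
have [N xR_stable] := R_artinian _ xR_ideal xR_decr.
have [r xN_r] : xR N.+1 (x ^+ N) by apply/(xR_stable N.+1 (leqnSn N)); exists 1; rewrite mulr1.
have [d xr_d] : exists d, (1 - x * r) * d = 1.
  apply: unit_notin_maxideal; apply: notin_maxidealD (maxidealN (maxidealMr r mx)).
  exact: maxideal_not1.
exists N; have xN_xr : x ^+ N * (1 - x * r) = 0.
  by rewrite mulrBr mulr1 mulrA -exprSr -xN_r subrr.
by rewrite -[x ^+ N]mulr1 -xr_d mulrA xN_xr mul0r.
Qed.

Lemma maxideal_coefMl (g h : {poly R}) :
  (forall i, m g`_i) -> forall i, m (h * g)`_i.
Proof. by move=> mg i; rewrite coefM; apply: maxideal_sum => j _; apply: maxidealMl. Qed.

Lemma regular_polyMr (g h : {poly R}) : regular_poly m (g * h) -> regular_poly m h.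
Proof.
move=> [i mNgh]; apply: NNPP => h_nonreg; apply: mNgh.
by apply: maxideal_coefMl => j; apply: NNPP => mNh; apply: h_nonreg; exists j.
Qed.

Lemma regular_polyMl (g h : {poly R}) : regular_poly m (g * h) -> regular_poly m g.
Proof. by rewrite mulrC; apply: regular_polyMr. Qed.

(* [residue_degree g d]: d is the degree of the image of g in (R/m)[x]. *)
Definition residue_degree (g : {poly R}) (d : nat) : Prop :=
  ~ m g`_d /\ forall i, (d < i)%N -> m g`_i.

Lemma residue_degree_exists (g : {poly R}) :
  regular_poly m g -> exists d, residue_degree g d.
Proof.
move=> [i mNgi].
suff m_above_ex n : (forall j, (n <= j)%N -> m g`_j) -> exists d, residue_degree g d.
  by apply: (m_above_ex (size g)) => j le_gj; rewrite nth_default //; apply: maxideal0.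
elim: n => [|n IHn] m_above; first by case: mNgi; apply: m_above.
have [mgn|mNgn] := classic (m g`_n); last by exists n.
by apply: IHn => j; rewrite leq_eqVlt => /predU1P [<- //|]; apply: m_above.
Qed.

Lemma residue_degree_size (g : {poly R}) d : residue_degree g d -> (d <= (size g).-1)%N.
Proof.
move=> [mNgd _]; suff: (d < size g)%N by lia.
rewrite ltnNge; apply/negP => le_gd; apply: mNgd; rewrite nth_default //.
exact: maxideal0.
Qed.

Lemma residue_degreeM (g h : {poly R}) a b :
  residue_degree g a -> residue_degree h b -> residue_degree (g * h) (a + b).
Proof.
move=> [mNga mg_above] [mNhb mh_above]; split.
  have lt_a_ab : (a < (a + b).+1)%N by rewrite ltnS leq_addr.
  rewrite coefM (bigD1 (Ordinal lt_a_ab)) //= addKn.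
  apply: notin_maxidealD; first exact: notin_maxidealM.
  apply: maxideal_sum => j ne_ja.
  have [lt_aj|lt_ja|eq_aj] := ltngtP a j.
  - by apply: maxidealMr; apply: mg_above.
  - by apply: maxidealMl; apply: mh_above; lia.
  - by case/eqP: ne_ja; apply: val_inj.
move=> k lt_abk; rewrite coefM; apply: maxideal_sum => j _.
have [lt_aj|le_ja] := ltnP a j.
- by apply: maxidealMr; apply: mg_above.
- by apply: maxidealMl; apply: mh_above; lia.
Qed.

Lemma poly_unit_residue_degree0 (g : {poly R}) :
  artinian R -> residue_degree g 0 -> Defs.poly_unit g.
Proof.
move=> R_artinian [mNg0 mg_above]; have [d g0d] := unit_notin_maxideal mNg0.
pose q := 1 - g * d%:P.
have nil_q : nilpotent q.
  apply: nilpotent_poly => i; apply: (nilpotent_maxideal R_artinian).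
  rewrite /q coefB coef1 coefMC; case: i => [|i] /=.
    by rewrite g0d subrr; apply: maxideal0.
  by rewrite sub0r; apply/maxidealN/maxidealMr/mg_above.
have [s qs1] := unit_subr1_nilpotent nil_q.
by exists (d%:P * s); rewrite mulrA -qs1 /q opprB addrC subrK.
Qed.

Lemma residue_degree_prod_irreducible (s : seq {poly R}) :
  artinian R -> (forall g, g \in s -> poly_irreducible g) ->
  regular_poly m (\prod_(g <- s) g) ->
  exists2 d, residue_degree (\prod_(g <- s) g) d & (size s <= d)%N.
Proof.
move=> R_artinian; elim: s => [|g s IHs] s_irr.
  move=> _; exists 0%N => //; rewrite big_nil; split; first by rewrite coef1; exact: maxideal_not1.
  by move=> [|i] // _; rewrite coef1; exact: maxideal0.
rewrite big_cons => reg_gs.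
have [a deg_s le_sa] := IHs (fun h hs => s_irr h (mem_behead (s := g :: s) hs)) (regular_polyMr reg_gs).
have [b deg_g] := residue_degree_exists (regular_polyMl reg_gs).
have b_gt0 : (0 < b)%N.
  rewrite lt0n; apply/eqP => b0; rewrite b0 in deg_g.
  exact: (s_irr g (mem_head g s)).1 (poly_unit_residue_degree0 R_artinian deg_g).
by exists (b + a)%N; [exact: residue_degreeM | rewrite /=; lia].
Qed.

End LocalRing.

Theorem lemma4p3 (R : comNzRingType) (m : R -> Prop)
  (Hloc : local_ring m) (Hart : artinian R) (Hm0 : exists a : R, m a /\ a <> 0)
  (f : {poly R}) (n : nat) (Hreg : regular_poly m f) (Hdeg : (size f).-1 = n) :
  forall k : nat, is_length f k -> (1 <= k <= n)%N.
Proof.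
move=> k [k_gt0 [s [size_s [s_irr prod_s]]]].
rewrite -prod_s in Hreg.
have [d deg_f le_kd] := residue_degree_prod_irreducible Hloc Hart s_irr Hreg.
have := residue_degree_size Hloc deg_f.
by rewrite prod_s Hdeg size_s in le_kd * => le_dn; apply/andP; split => //; lia.
Qed.
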